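(* Let $A$ be a finite alphabet with $|A|\ge 2$ and $k \ge 1$. Let $\mathcal{R}$ be the set of reduced words over $\tilde A$ and $\mathcal{R}_{\le n}$ those of length at most $n$. Let $\mathbb{P}_n$ be the uniform probability law on $\mathcal{R}_{\le n}^k$. Let $T$ be the set of subgroups of $F(A)$ of the form $\langle\vec h\rangle$ with $\vec h \in \mathcal{R}^k$, let $T_n = \{\langle \vec h\rangle \mid \vec h\in \mathcal{R}_{\le n}^k\}$, and let $\mathbb{Q}_n$ be the uniform probability law on $T_n$. Let $X\subseteq T$ and $Y = \{\vec h\in\mathcal{R}^k \mid \langle\vec h\rangle\in X\}$. Then: if $\lim_n\mathbb{P}_n(Y) = 0$, then $\lim_n \mathbb{Q}_n(X) = 0$; if $\mathbb{P}_n(Y) = \mathcal{O}(e^{-cn})$ for some $c>0$, then $\mathbb{Q}_n(X) = \mathcal{O}(e^{-c'n})$ for some $c'>0$. Likewise, if $\lim_n \mathbb{P}_n(Y) = 1$ then $\lim_n\mathbb{Q}_n(X) = 1$, and if $1-\mathbb{P}_n(Y) = \mathcal{O}(e^{-cn})$ for some $c>0$ then $1-\mathbb{Q}_n(X) = \mathcal{O}(e^{-c'n})$ for some $c'>0$.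
   Context: $F(A)$ is the free group on $A$, identified with the set of reduced words over $\tilde A = A\cup\bar A$ ($\bar a$ representing $a^{-1}$); a word is reduced if it has no factor $a\bar a$ or $\bar a a$. For a tuple $\vec h = (h_1,\dots,h_k)$ of elements of $F(A)$, $\langle\vec h\rangle$ is the subgroup generated by $h_1,\dots,h_k$. *)

From Stdlib Require Import Reals List Lia ClassicalEpsilon.
Import ListNotations.
Set Implicit Arguments.
Open Scope R_scope.

Section FreeGroup.
Variable A : Type.

(* letters of \tilde A = A ∪ \bar A : (a,false) is a, (a,true) is \bar a *)
Definition letter := (A * bool)%type.
Definition inv_letter (x : letter) : letter := (fst x, negb (snd x)).
Definition word := list letter.

Definition reduced (w : word) : Prop :=
  forall u v x y, w = u ++ x :: y :: v -> y <> inv_letter x.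

Definition inv_word (w : word) : word := rev (map inv_letter w).

Inductive cancel_step : word -> word -> Prop :=
  | cancel_intro u v x : cancel_step (u ++ x :: inv_letter x :: v) (u ++ v).

Inductive free_equiv : word -> word -> Prop :=
  | fe_refl w : free_equiv w w
  | fe_step w1 w2 : cancel_step w1 w2 -> free_equiv w1 w2
  | fe_sym w1 w2 : free_equiv w1 w2 -> free_equiv w2 w1
  | fe_trans w1 w2 w3 : free_equiv w1 w2 -> free_equiv w2 w3 -> free_equiv w1 w3.

(* the subgroup <h_1,...,h_k> of F(A), as a set of reduced words:
   reduced forms of products of generators and their inverses *)
Definition gen (h : list word) : word -> Prop :=
  fun w => reduced w /\
    exists s : list (word * bool),
      (forall g, In g s -> In (fst g) h) /\
      free_equiv (concat (map (fun g : word * bool => if snd g then inv_word (fst g) else fst g) s)) w.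

Definition Rk (k : nat) (h : list word) : Prop :=
  length h = k /\ Forall reduced h.
Definition Rk_le (k n : nat) (h : list word) : Prop :=
  length h = k /\ Forall (fun w => reduced w /\ (length w <= n)%nat) h.

Definition Tset (k : nat) (H : word -> Prop) : Prop := exists h, Rk k h /\ H = gen h.
Definition Tn (k n : nat) (H : word -> Prop) : Prop := exists h, Rk_le k n h /\ H = gen h.
End FreeGroup.

(* cardinality of a finite set (0 if infinite) *)
Definition fcard {U : Type} (S : U -> Prop) : nat :=
  epsilon (inhabits 0%nat)
    (fun m => exists l : list U, NoDup l /\ length l = m /\ forall x, In x l <-> S x).

Definition Pn {A : Type} (k n : nat) (Y : list (word A) -> Prop) : R :=
  INR (fcard (fun h => Rk_le k n h /\ Y h)) / INR (fcard (Rk_le (A:=A) k n)).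
Definition Qn {A : Type} (k n : nat) (X : (word A -> Prop) -> Prop) : R :=
  INR (fcard (fun H => Tn k n H /\ X H)) / INR (fcard (Tn (A:=A) k n)).

Definition exp_small (u : nat -> R) : Prop :=
  exists c C : R, 0 < c /\ exists N : nat, forall n, (N <= n)%nat -> Rabs (u n) <= C * exp (- c * INR n).

(* Encode a tuple h of reduced words of length ≤ n by the pair (⟨ψ h⟩, tails), where
   (ψ h)_j = a b^j a · c_j · a b^j a, the core c_j is the prefix of length N = n - 2k - 4
   of h_j padded to a reduced word of length N + 2, and the tails are the remaining
   suffixes, of length ≤ 2k + 4.  The markers a b^j a make ψ h a small cancellation
   tuple: in a freely reduced product of the (ψ h)_j^{±1}, adjacent markers merge
   without cancelling into the cores, so a product of m factors has length ≥ m (N + 2).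
   Hence the (ψ h)_j are exactly the elements of ⟨ψ h⟩ that begin with a and are
   shorter than 2 (N + 2): the subgroup determines ψ h, and the encoding is injective.
   Thus |R_{≤n}^k| ≤ M |T_n| with M independent of n, while choosing generators gives
   |T_n ∩ X| ≤ |R_{≤n}^k ∩ Y|.  So Q_n(X) ≤ M P_n(Y), likewise for the complements,
   and the four statements follow. *)

From Stdlib Require Import Reals Lra Lia List Arith.
From Stdlib Require Import ClassicalEpsilon FunctionalExtensionality PropExtensionality.
Import ListNotations.
Open Scope nat_scope.

Definition dec (P : Prop) : {P} + {~ P} := excluded_middle_informative P.

Definition enumerates {U : Type} (S : U -> Prop) (l : list U) : Prop :=
  NoDup l /\ forall x, In x l <-> S x.

Lemma enumerates_exists {U : Type} (S : U -> Prop) (l : list U) :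
  (forall x, S x -> In x l) -> exists l', enumerates S l'.
Proof.
  intros Hcover.
  exists (nodup (fun x y => dec (x = y)) (filter (fun x => if dec (S x) then true else false) l)).
  split; [apply NoDup_nodup|].
  intros x. rewrite nodup_In, filter_In.
  specialize (Hcover x). destruct (dec (S x)); intuition congruence.
Qed.

Lemma enumerates_subset {U : Type} (S P : U -> Prop) l :
  enumerates S l -> exists l', enumerates (fun x => S x /\ P x) l'.
Proof. intros [_ Hl]. apply (enumerates_exists _ l). intros x [Sx _]. now apply Hl. Qed.

Lemma fcard_enumerates {U : Type} {S : U -> Prop} {l : list U} :
  enumerates S l -> fcard S = length l.
Proof.
  intros [Nl Hl]. unfold fcard.
  destruct (epsilon_spec (inhabits 0)
    (fun m => exists l : list U, NoDup l /\ length l = m /\ forall x, In x l <-> S x))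
    as [l' (Nl' & <- & Hl')]; [now exists (length l), l|].
  apply Nat.le_antisymm; apply NoDup_incl_length; auto; intros x Hx.
  - apply Hl, Hl', Hx.
  - apply Hl', Hl, Hx.
Qed.

Lemma fcard_ext {U : Type} (S S' : U -> Prop) : (forall x, S x <-> S' x) -> fcard S = fcard S'.
Proof.
  intros H. replace S' with S; [reflexivity|].
  extensionality x. apply propositional_extensionality, H.
Qed.

Lemma fcard_pos {U : Type} (S : U -> Prop) l x : enumerates S l -> S x -> 0 < fcard S.
Proof.
  intros El Sx. rewrite (fcard_enumerates El).
  destruct El as [_ El]. apply El in Sx. destruct l; [destruct Sx|simpl; lia].
Qed.

Lemma fcard_le_of_injective {U V : Type} (S : U -> Prop) (S' : V -> Prop) (f : U -> V) l l' :
  enumerates S l -> enumerates S' l' -> (forall x, S x -> S' (f x)) ->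
  (forall x y, S x -> S y -> f x = f y -> x = y) -> fcard S <= fcard S'.
Proof.
  intros El El' Hmaps Hinj.
  rewrite (fcard_enumerates El), (fcard_enumerates El'), <- (length_map f l).
  destruct El as [Nl Hl], El' as [_ Hl'].
  apply NoDup_incl_length.
  - apply NoDup_map_NoDup_ForallPairs; auto.
    intros x y Hx Hy. apply Hinj; apply Hl; assumption.
  - intros y (x & <- & Hx)%in_map_iff. apply Hl', Hmaps, Hl, Hx.
Qed.

Lemma fcard_split {U : Type} (S P : U -> Prop) l : enumerates S l ->
  fcard S = fcard (fun x => S x /\ P x) + fcard (fun x => S x /\ ~ P x).
Proof.
  intros [Nl Hl].
  set (f := fun x => if dec (P x) then true else false).
  rewrite (fcard_enumerates (conj Nl Hl)).
  rewrite (@fcard_enumerates _ _ (filter f l)),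
    (@fcard_enumerates _ _ (filter (fun x => negb (f x)) l)).
  1: symmetry; apply filter_length.
  all: split; [now apply NoDup_filter|].
  all: intros x; rewrite filter_In, Hl; unfold f; destruct (dec (P x)); simpl; intuition congruence.
Qed.

Lemma enumerates_prod {U V : Type} {S1 : U -> Prop} {S2 : V -> Prop} {l1 l2} :
  enumerates S1 l1 -> enumerates S2 l2 ->
  enumerates (fun p : U * V => S1 (fst p) /\ S2 (snd p)) (list_prod l1 l2).
Proof.
  intros [N1 H1] [N2 H2]. split.
  - clear H1. induction N1 as [|x l1 Hx N1 IH]; simpl; [constructor|].
    apply NoDup_app; auto.
    + apply NoDup_map_NoDup_ForallPairs; auto. intros y z _ _ E. now injection E.
    + intros [y z] (w & E & _)%in_map_iff Hn. injection E as <- <-.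
      apply in_prod_iff in Hn. tauto.
  - intros [x y]. rewrite in_prod_iff, H1, H2. reflexivity.
Qed.

Lemma fcard_prod {U V : Type} {S1 : U -> Prop} {S2 : V -> Prop} {l1 l2} :
  enumerates S1 l1 -> enumerates S2 l2 ->
  fcard (fun p : U * V => S1 (fst p) /\ S2 (snd p)) = fcard S1 * fcard S2.
Proof.
  intros E1 E2.
  rewrite (fcard_enumerates (enumerates_prod E1 E2)), (fcard_enumerates E1), (fcard_enumerates E2).
  apply length_prod.
Qed.

Fixpoint lists_le {U : Type} (L : list U) (n : nat) : list (list U) :=
  match n with
  | 0 => [[]]
  | S n => [] :: flat_map (fun x => map (cons x) (lists_le L n)) L
  end.

Lemma in_lists_le {U : Type} (L : list U) n (w : list U) :
  length w <= n -> (forall x, In x w -> In x L) -> In w (lists_le L n).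
Proof.
  revert w; induction n as [|n IH]; intros [|x w] Hlen Hin; simpl in *; auto; try lia.
  right. apply in_flat_map. exists x. split; auto.
  apply in_map, IH; auto. lia.
Qed.

Lemma repeat_app_cons_inj {T : Type} (y z z' : T) r r' (u u' : list T) :
  repeat y r ++ z :: u = repeat y r' ++ z' :: u' -> z <> y -> z' <> y ->
  r = r' /\ z = z' /\ u = u'.
Proof.
  revert r'; induction r as [|r IH]; intros [|r'] E Hz Hz'; simpl in E; injection E; intros; subst;
    try congruence.
  - auto.
  - destruct (IH r') as (-> & -> & ->); auto.
Qed.

Section Words.
Context {A : Type}.
Notation letter := (letter A).
Notation word := (word A).
Notation inv := (@inv_letter A).

Lemma inv_letter_involutive (x : letter) : inv (inv x) = x.
Proof. destruct x as [a s]. unfold inv_letter. simpl. now rewrite Bool.negb_involutive. Qed.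

Lemma inv_letter_neq (x : letter) : inv x <> x.
Proof. destruct x as [a []]; discriminate. Qed.

Lemma reduced_nil : reduced (A:=A) [].
Proof. intros [] v x y E; discriminate. Qed.

Lemma reduced_cons (x : letter) (w : word) :
  reduced (x :: w) <-> reduced w /\ (forall y w', w = y :: w' -> y <> inv x).
Proof.
  split.
  - intros H. split.
    + intros u v z y E. apply (H (x :: u) v z y). now rewrite E.
    + intros y w' E. apply (H [] w' x y). now rewrite E.
  - intros [Hw Hx] [|c u] v z y E; injection E as -> E.
    + now apply (Hx y v).
    + now apply (Hw u v z y).
Qed.

Lemma reduced_single (x : letter) : reduced [x].
Proof. apply reduced_cons. split; [apply reduced_nil|discriminate]. Qed.

Lemma reduced_app_l (u v : word) : reduced (u ++ v) -> reduced u.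
Proof. intros H a b x y ->. apply (H a (b ++ v) x y). now rewrite <- app_assoc. Qed.

Lemma reduced_app_r (u v : word) : reduced (u ++ v) -> reduced v.
Proof. intros H a b x y ->. apply (H (u ++ a) b x y). now rewrite <- app_assoc. Qed.

Lemma reduced_glue (u v : word) (x : letter) :
  reduced (u ++ [x]) -> reduced (x :: v) -> reduced (u ++ x :: v).
Proof.
  induction u as [|y u IH]; intros Hu Hv; [exact Hv|].
  apply reduced_cons in Hu as [Hu Hy]. apply reduced_cons. split; [now apply IH|].
  intros z w' E. destruct u as [|c u]; injection E as <- _.
  - now apply (Hy x []).
  - now apply (Hy c (u ++ [x])).
Qed.

Lemma reduced_repeat_snoc (y z : letter) d : z <> inv y -> reduced (repeat y d ++ [z]).
Proof.
  intros Hz. induction d as [|d IH]; [apply reduced_single|].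
  apply reduced_cons. split; [exact IH|].
  intros c w E. destruct d; injection E as <- _; [exact Hz|].
  intros E. exact (inv_letter_neq _ (eq_sym E)).
Qed.

Lemma reduced_sandwich (x y z : letter) d :
  y <> inv x -> z <> inv y -> (d = 0 -> z <> inv x) -> reduced (x :: repeat y d ++ [z]).
Proof.
  intros Hxy Hyz Hxz. destruct d as [|d].
  - apply reduced_cons. split; [apply reduced_single|]. intros c w [= <- _]. now apply Hxz.
  - apply (reduced_glue [x]).
    + apply reduced_cons. split; [apply reduced_single|]. now intros c w [= <- _].
    + exact (reduced_repeat_snoc y z (S d) Hyz).
Qed.

Definition push_letter (x : letter) (r : word) : word :=
  match r with
  | y :: r' => if dec (y = inv x) then r' else x :: r
  | [] => [x]
  end.

Definition normal_form (w : word) : word := fold_right push_letter [] w.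

Lemma push_letter_reduced (x : letter) (r : word) : reduced r -> reduced (push_letter x r).
Proof.
  intros H. destruct r as [|y r]; simpl; [apply reduced_single|].
  destruct (dec (y = inv x)) as [_|Hy].
  - now apply reduced_cons in H.
  - apply reduced_cons. split; [exact H|]. now intros z w' [= <- _].
Qed.

Lemma normal_form_reduced (w : word) : reduced (normal_form w).
Proof. induction w; simpl; [apply reduced_nil|now apply push_letter_reduced]. Qed.

Lemma normal_form_id (w : word) : reduced w -> normal_form w = w.
Proof.
  induction w as [|x w IH]; intros H; simpl; [reflexivity|].
  apply reduced_cons in H as [Hw Hx]. rewrite IH by exact Hw.
  destruct w as [|y w]; simpl; [reflexivity|].
  destruct (dec (y = inv x)); [|reflexivity]. exfalso. now apply (Hx y w).
Qed.

Lemma push_letter_cancel (x : letter) (r : word) :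
  reduced r -> push_letter x (push_letter (inv x) r) = r.
Proof.
  intros H. destruct r as [|y r]; simpl.
  - now destruct (dec (inv x = inv x)).
  - rewrite inv_letter_involutive. destruct (dec (y = x)) as [->|Hy].
    + destruct r as [|z r]; simpl; [reflexivity|].
      destruct (dec (z = inv x)); [|reflexivity].
      apply reduced_cons in H as [_ H]. exfalso. now apply (H z r).
    + simpl. now destruct (dec (inv x = inv x)).
Qed.

Lemma free_equiv_normal_form_eq (w1 w2 : word) :
  free_equiv w1 w2 -> normal_form w1 = normal_form w2.
Proof.
  induction 1 as [| ? ? [u v x] | |]; try congruence.
  unfold normal_form. rewrite !fold_right_app. simpl.
  f_equal. apply push_letter_cancel, normal_form_reduced.
Qed.

Lemma free_equiv_app (u v w1 w2 : word) :
  free_equiv w1 w2 -> free_equiv (u ++ w1 ++ v) (u ++ w2 ++ v).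
Proof.
  induction 1 as [w| ? ? [u0 v0 x] | |].
  - apply fe_refl.
  - replace (u ++ (u0 ++ x :: inv x :: v0) ++ v) with ((u ++ u0) ++ x :: inv x :: v0 ++ v)
      by now rewrite <- !app_assoc.
    replace (u ++ (u0 ++ v0) ++ v) with ((u ++ u0) ++ v0 ++ v) by now rewrite <- !app_assoc.
    apply fe_step, cancel_intro.
  - now apply fe_sym.
  - eapply fe_trans; eassumption.
Qed.

Lemma free_equiv_reduced_eq (w1 w2 : word) :
  free_equiv w1 w2 -> reduced w1 -> reduced w2 -> w1 = w2.
Proof.
  intros H R1 R2. rewrite <- (normal_form_id _ R1), <- (normal_form_id _ R2).
  now apply free_equiv_normal_form_eq.
Qed.

Lemma inv_word_app (u v : word) : inv_word (u ++ v) = inv_word v ++ inv_word u.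
Proof. unfold inv_word. now rewrite map_app, rev_app_distr. Qed.

Lemma inv_word_cons (x : letter) (u : word) : inv_word (x :: u) = inv_word u ++ [inv x].
Proof. reflexivity. Qed.

Lemma inv_word_involutive (u : word) : inv_word (inv_word u) = u.
Proof.
  unfold inv_word. rewrite map_rev, rev_involutive, map_map.
  rewrite (map_ext _ (fun x => x)) by apply inv_letter_involutive. apply map_id.
Qed.

Lemma length_inv_word (u : word) : length (inv_word u) = length u.
Proof. unfold inv_word. now rewrite length_rev, length_map. Qed.

Lemma inv_word_repeat (y : letter) d : inv_word (repeat y d) = repeat (inv y) d.
Proof. unfold inv_word. now rewrite map_repeat, rev_repeat. Qed.

Lemma free_equiv_cancel_word (u p v : word) : free_equiv (u ++ p ++ inv_word p ++ v) (u ++ v).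
Proof.
  revert u v; induction p as [|x p IH]; intros u v; simpl; [apply fe_refl|].
  rewrite inv_word_cons.
  apply fe_trans with (u ++ x :: inv x :: v).
  - specialize (IH (u ++ [x]) (inv x :: v)). rewrite <- !app_assoc in IH.
    now rewrite <- app_assoc.
  - apply fe_step, cancel_intro.
Qed.

Lemma free_equiv_repeat_cancel (y : letter) i j :
  free_equiv (repeat y i ++ repeat (inv y) j) (repeat y (i - j) ++ repeat (inv y) (j - i)).
Proof.
  set (m := Nat.min i j).
  replace (repeat y i) with (repeat y (i - j) ++ repeat y m)
    by (rewrite <- repeat_app; f_equal; lia).
  replace (repeat (inv y) j) with (inv_word (repeat y m) ++ repeat (inv y) (j - i))
    by (rewrite inv_word_repeat, <- repeat_app; f_equal; lia).
  rewrite <- app_assoc. apply free_equiv_cancel_word.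
Qed.

Lemma reduced_inv_word (u : word) : reduced u -> reduced (inv_word u).
Proof.
  intros H a b x y E ->.
  apply (H (inv_word b) (inv_word a) x (inv x)); [|reflexivity].
  rewrite <- (inv_word_involutive u), E, inv_word_app. simpl.
  rewrite !inv_word_cons, inv_letter_involutive, <- !app_assoc. reflexivity.
Qed.

Lemma reduced_snoc (t : word) (z : letter) :
  reduced t -> (forall u y, t = u ++ [y] -> z <> inv y) -> reduced (t ++ [z]).
Proof.
  induction t as [|c t IH]; intros Ht Hz; [apply reduced_single|].
  apply reduced_cons in Ht as [Ht Hc]. apply reduced_cons. split.
  - apply IH; [exact Ht|]. intros u y ->. apply (Hz (c :: u)). reflexivity.
  - intros y w E. destruct t as [|d t]; injection E as <- _.
    + exact (Hz [] c eq_refl).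
    + now apply (Hc d t).
Qed.

Lemma reduced_cons_snoc (x z : letter) (t : word) :
  reduced (x :: t) -> reduced (t ++ [z]) -> (t = [] -> z <> inv x) -> reduced (x :: t ++ [z]).
Proof.
  intros Hx Hz Hnil. apply reduced_cons in Hx as [_ Hx]. apply reduced_cons. split; [exact Hz|].
  intros y w E. destruct t as [|c t]; injection E as <- _.
  - now apply Hnil.
  - now apply (Hx c t).
Qed.

End Words.

Section Products.
Context {A : Type}.
Notation word := (word A).
Definition signed (s : bool) (w : word) : word := if s then inv_word w else w.
Definition factor_word (g : word * bool) : word := signed (snd g) (fst g).
Definition product (gs : list (word * bool)) : word := concat (map factor_word gs).

Definition cancels (g g' : word * bool) : Prop := fst g' = fst g /\ snd g' = negb (snd g).

Definition push_factor (g : word * bool) (gs : list (word * bool)) :=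
  match gs with
  | g' :: gs' => if dec (cancels g g') then gs' else g :: gs
  | [] => [g]
  end.

(* Cancels adjacent mutually inverse factors only, not letters inside the words. *)
Definition free_reduce (gs : list (word * bool)) := fold_right push_factor [] gs.

Fixpoint freely_reduced (gs : list (word * bool)) : Prop :=
  match gs with
  | g :: ((g' :: _) as gs') => ~ cancels g g' /\ freely_reduced gs'
  | _ => True
  end.

Lemma reduced_signed s (w : word) : reduced w -> reduced (signed s w).
Proof. intros H. destruct s; [now apply reduced_inv_word|exact H]. Qed.

Lemma in_free_reduce gs g : In g (free_reduce gs) -> In g gs.
Proof.
  induction gs as [|g0 gs IH]; simpl; [easy|].
  revert IH. destruct (free_reduce gs) as [|g' gs']; simpl; [tauto|].
  destruct (dec (cancels g0 g')); simpl; tauto.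
Qed.

Lemma free_reduce_freely_reduced gs : freely_reduced (free_reduce gs).
Proof.
  induction gs as [|g gs IH]; simpl; [exact I|].
  destruct (free_reduce gs) as [|g' gs']; simpl; [exact I|].
  destruct (dec (cancels g g')); simpl.
  - destruct gs'; simpl in *; tauto.
  - now split.
Qed.

Lemma factor_word_cancels g g' : cancels g g' -> factor_word g' = inv_word (factor_word g).
Proof.
  destruct g as [w []], g' as [w' s']; unfold cancels, factor_word; simpl; intros [-> ->];
    simpl; now rewrite ?inv_word_involutive.
Qed.

Lemma free_equiv_free_reduce gs : free_equiv (product gs) (product (free_reduce gs)).
Proof.
  induction gs as [|g gs IH]; simpl; [apply fe_refl|].
  apply fe_trans with (factor_word g ++ product (free_reduce gs)).
  - pose proof (free_equiv_app (factor_word g) [] _ _ IH) as H. now rewrite !app_nil_r in H.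
  - destruct (free_reduce gs) as [|g' gs']; simpl; [apply fe_refl|].
    destruct (dec (cancels g g')) as [Hc|]; [|apply fe_refl].
    unfold product; simpl. rewrite (factor_word_cancels _ _ Hc).
    apply (free_equiv_cancel_word []).
Qed.

End Products.

Section Markers.
Context {A : Type}.
Notation word := (word A).
Variables a0 b0 : A.
Hypothesis Hab : a0 <> b0.

Definition marker (s : bool) (i : nat) : word := (a0, s) :: repeat (b0, s) i ++ [(a0, s)].

Lemma signed_marker s i : signed s (marker false i) = marker s i.
Proof.
  destruct s; [|reflexivity].
  cbn [signed]. unfold marker, inv_word. simpl.
  now rewrite map_app, map_repeat, rev_app_distr, rev_repeat.
Qed.

Lemma marker_reduced s i : reduced (marker s i).
Proof. apply reduced_sandwich; try (intros [= E]; congruence); intros _ [= E]; now destruct s. Qed.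

Lemma marker_injective i j (u u' : word) : marker false i ++ u = marker false j ++ u' -> i = j.
Proof.
  unfold marker. simpl. intros [= E]. rewrite <- !app_assoc in E.
  apply repeat_app_cons_inj in E as [-> _]; [reflexivity| |]; intros [= E']; congruence.
Qed.

Lemma marker_junction s1 i1 s2 i2 : (i1 = i2 -> s1 = s2) ->
  exists J, free_equiv (marker s1 i1 ++ marker s2 i2) ((a0, s1) :: J ++ [(a0, s2)]) /\
    reduced ((a0, s1) :: J ++ [(a0, s2)]).
Proof.
  intros Hsign. set (x := (a0, s1)). set (y := (b0, s1)).
  destruct (Bool.bool_dec s2 s1) as [->|Hs].
  - exists (repeat y i1 ++ x :: x :: repeat y i2). split.
    + unfold marker. simpl. rewrite <- !app_assoc. apply fe_refl.
    + rewrite <- app_assoc. change (reduced ((x :: repeat y i1) ++ x :: (x :: repeat y i2 ++ [x]))).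
      apply reduced_glue; [apply marker_reduced|].
      apply reduced_cons. split; [apply marker_reduced|]. intros z w [= <- _].
      intros E. exact (inv_letter_neq _ (eq_sym E)).
  - assert (s2 = negb s1) as -> by now destruct s1, s2.
    assert (Hi : i1 <> i2) by (intros E; specialize (Hsign E); now destruct s1).
    exists (repeat y (i1 - i2) ++ repeat (inv_letter y) (i2 - i1)). split.
    + apply fe_trans with ((x :: repeat y i1) ++ repeat (inv_letter y) i2 ++ [inv_letter x]).
      * pose proof (free_equiv_cancel_word (x :: repeat y i1) [x]
          (repeat (inv_letter y) i2 ++ [inv_letter x])) as H.
        unfold marker. simpl in *. now rewrite <- !app_assoc in *.
      * rewrite app_assoc. simpl.
        apply (free_equiv_app [x] [inv_letter x] _ _ (free_equiv_repeat_cancel y i1 i2)).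
    + destruct (Nat.lt_ge_cases i1 i2);
        [replace (i1 - i2) with 0 by lia | replace (i2 - i1) with 0 by lia];
        rewrite ?app_nil_r; simpl;
        apply reduced_sandwich; try (intros [= E]; congruence); try lia; now destruct s1.
Qed.

End Markers.

Section SmallCancellation.
Context {A : Type}.
Notation word := (word A).
Variables a0 b0 : A.
Hypothesis Hab : a0 <> b0.
Notation marker := (marker a0 b0).
Variable L : nat.

Definition admissible_core (c : word) : Prop :=
  reduced ((a0, false) :: c ++ [(a0, false)]) /\ L <= length c.

Definition marked_word (i : nat) (c : word) : word := marker false i ++ c ++ marker false i.

Lemma length_marked_word i c : length (marked_word i c) = 2 * (i + 2) + length c.
Proof.
  unfold marked_word, marker. rewrite !length_app. simpl.
  rewrite !length_app, repeat_length. simpl. lia.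
Qed.

Lemma marked_word_inj i c c' : marked_word i c = marked_word i c' -> c = c'.
Proof. unfold marked_word. intros E. now apply app_inv_head, app_inv_tail in E. Qed.

Lemma signed_marked_word s i c :
  signed s (marked_word i c) = marker s i ++ signed s c ++ marker s i.
Proof.
  destruct s; [|reflexivity]. unfold marked_word, signed.
  rewrite !inv_word_app, app_assoc. now rewrite <- (signed_marker a0 b0 true).
Qed.

Lemma marked_word_reduced i c :
  reduced ((a0, false) :: c ++ [(a0, false)]) -> reduced (marked_word i c).
Proof.
  intros Hc. unfold marked_word, marker. simpl. rewrite <- !app_assoc. simpl.
  apply (reduced_glue ((a0, false) :: repeat (b0, false) i)); [apply (marker_reduced _ _ Hab)|].
  rewrite app_comm_cons. apply reduced_glue; [exact Hc|apply (marker_reduced _ _ Hab)].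
Qed.

(* One step of the small cancellation argument: prepending the factor
   [signed s0 (marked_word i0 c0)] to a reduced word starting with
   [marker s1 i1 ++ signed s1 c1] only merges the two adjacent markers. *)
Lemma prepend_factor s0 i0 c0 s1 i1 c1 v w :
  (i0 = i1 -> s0 = s1) -> reduced ((a0, false) :: c0 ++ [(a0, false)]) ->
  reduced (marker s1 i1 ++ signed s1 c1 ++ v) ->
  free_equiv w (marker s1 i1 ++ signed s1 c1 ++ v) ->
  exists J, reduced (marker s0 i0 ++ signed s0 c0 ++ J ++ signed s1 c1 ++ v) /\
    free_equiv (signed s0 (marked_word i0 c0) ++ w)
      (marker s0 i0 ++ signed s0 c0 ++ J ++ signed s1 c1 ++ v).
Proof.
  intros Hsign Hc0 Hw Fw.
  destruct (marker_junction _ _ Hab _ _ _ _ Hsign) as (J & FJ & RJ).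
  set (x0 := (a0, s0)) in *. set (x1 := (a0, s1)) in *.
  exists (x0 :: J ++ [x1]).
  pose proof (reduced_signed s0 _ (marked_word_reduced i0 c0 Hc0)) as R0.
  rewrite signed_marked_word in R0. split.
  - assert (Rhead : reduced ((marker s0 i0 ++ signed s0 c0) ++ [x0])).
    { apply (reduced_app_l _ (repeat (b0, s0) i0 ++ [x0])). now rewrite <- !app_assoc in *. }
    assert (Rtail : reduced (x1 :: signed s1 c1 ++ v)).
    { apply (reduced_app_r (x1 :: repeat (b0, s1) i1) _). unfold marker in Hw. simpl in *.
      now rewrite <- !app_assoc in Hw. }
    assert (Rmid : reduced (x0 :: J ++ x1 :: signed s1 c1 ++ v))
      by exact (reduced_glue (x0 :: J) _ _ RJ Rtail).
    pose proof (reduced_glue _ _ _ Rhead Rmid) as R.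
    rewrite <- app_assoc in R. rewrite <- app_comm_cons, <- !app_assoc. exact R.
  - rewrite signed_marked_word, <- !app_assoc.
    apply fe_trans with
      (marker s0 i0 ++ signed s0 c0 ++ marker s0 i0 ++ marker s1 i1 ++ signed s1 c1 ++ v).
    + pose proof (free_equiv_app (marker s0 i0 ++ signed s0 c0 ++ marker s0 i0) [] _ _ Fw) as H.
      now rewrite !app_nil_r, <- !app_assoc in H.
    + pose proof (free_equiv_app (marker s0 i0 ++ signed s0 c0) (signed s1 c1 ++ v) _ _ FJ) as H.
      now rewrite <- !app_assoc in H.
Qed.

Variable P : list word.
Hypothesis HP :
  forall i, i < length P -> exists c, nth i P [] = marked_word i c /\ admissible_core c.

Definition factor_at (i : nat) (c : word) (w : word) : Prop :=
  i < length P /\ w = nth i P [] /\ w = marked_word i c /\ admissible_core c.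

Lemma In_factor_at w : In w P -> exists i c, factor_at i c w.
Proof.
  intros Hw. destruct (In_nth _ _ [] Hw) as (i & Hi & E).
  destruct (HP _ Hi) as (c & Ec & Hc). exists i, c. unfold factor_at. rewrite <- E. auto.
Qed.

(* The small cancellation property: every core survives free reduction. *)
Lemma product_reduced_form g gs :
  freely_reduced (g :: gs) -> (forall g', In g' (g :: gs) -> In (fst g') P) ->
  exists i c v, factor_at i c (fst g) /\
    reduced (marker (snd g) i ++ signed (snd g) c ++ v) /\
    free_equiv (product (g :: gs)) (marker (snd g) i ++ signed (snd g) c ++ v) /\
    length (g :: gs) * L <= length (signed (snd g) c ++ v).
Proof.
  revert g; induction gs as [|g1 gs IH]; intros g Hred Hin.
  - destruct (In_factor_at _ (Hin g (or_introl eq_refl))) as (i & c & Hat).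
    exists i, c, (marker (snd g) i). pose proof Hat as (_ & _ & Eg & [Rc Lc]).
    assert (Ef : factor_word g = marker (snd g) i ++ signed (snd g) c ++ marker (snd g) i)
      by (unfold factor_word; now rewrite Eg, signed_marked_word).
    split; [exact Hat|split; [|split]].
    + rewrite <- Ef. apply reduced_signed. rewrite Eg. now apply marked_word_reduced.
    + unfold product. simpl. rewrite app_nil_r, Ef. apply fe_refl.
    + rewrite length_app. destruct (snd g); simpl; rewrite ?length_inv_word; lia.
  - destruct Hred as [Hnc Hred].
    destruct (IH g1 Hred (fun g' H => Hin g' (or_intror H))) as (i1 & c1 & v & Hat1 & Rw & Fw & Lw).
    destruct (In_factor_at _ (Hin g (or_introl eq_refl))) as (i0 & c0 & Hat0).
    pose proof Hat0 as (_ & E0 & Eg & [Rc0 Lc0]). pose proof Hat1 as (_ & E1 & _).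
    assert (Hsign : i0 = i1 -> snd g = snd g1).
    { intros <-. destruct (Bool.bool_dec (snd g1) (snd g)) as [|Hs]; [auto|].
      exfalso. apply Hnc. split; [congruence|]. now destruct (snd g), (snd g1). }
    destruct (prepend_factor _ _ _ _ _ _ _ _ Hsign Rc0 Rw Fw) as (J & RJ & FJ).
    exists i0, c0, (J ++ signed (snd g1) c1 ++ v). split; [exact Hat0|split; [exact RJ|split]].
    + unfold product in *. simpl. unfold factor_word at 1. rewrite Eg. exact FJ.
    + rewrite !length_app in *. simpl in *. destruct (snd g); simpl; rewrite ?length_inv_word; lia.
Qed.

Lemma gen_generator q : In q P -> reduced q -> gen P q.
Proof.
  intros Hq Rq. split; [exact Rq|]. exists [(q, false)]. split.
  - intros g [<-|[]]. exact Hq.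
  - simpl. rewrite app_nil_r. apply fe_refl.
Qed.

Lemma short_element_is_factor q :
  gen P q -> length q < 2 * L -> hd_error q = Some (a0, false) ->
  exists i, i < length P /\ q = nth i P [].
Proof.
  intros [Rq (gs & Hgs & Fq)] Hlen Hhd. change (free_equiv (product gs) q) in Fq.
  assert (F : free_equiv (product (free_reduce gs)) q)
    by exact (fe_trans (fe_sym (free_equiv_free_reduce gs)) Fq).
  assert (Hin : forall g, In g (free_reduce gs) -> In (fst g) P)
    by (intros g Hg; now apply Hgs, in_free_reduce).
  pose proof (free_reduce_freely_reduced gs) as Hred.
  destruct (free_reduce gs) as [|g gs'].
  - apply free_equiv_reduced_eq in F as <-; [discriminate|apply reduced_nil|exact Rq].
  - destruct (product_reduced_form _ _ Hred Hin) as (i & c & v & (Hi & E & Eg & [Rc _]) & Rw & Fw & Lw).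
    assert (Eq : marker (snd g) i ++ signed (snd g) c ++ v = q)
      by (apply free_equiv_reduced_eq; auto; exact (fe_trans (fe_sym Fw) F)).
    assert (Es : snd g = false) by (rewrite <- Eq in Hhd; now injection Hhd).
    destruct gs' as [|g' gs'].
    + exists i. split; [exact Hi|]. rewrite <- E.
      apply free_equiv_reduced_eq; [|exact Rq|rewrite Eg; exact (marked_word_reduced i c Rc)].
      apply fe_sym. unfold product, factor_word in F. simpl in F. now rewrite Es, app_nil_r in F.
    + rewrite <- Eq, length_app in Hlen. simpl in Lw. lia.
Qed.
End SmallCancellation.

Section Encoding.
Context {A : Type}.
Notation letter := (letter A).
Notation word := (word A).
Variables a0 b0 : A.
Hypothesis Hab : a0 <> b0.
Variable N : nat.

Definition pad (y : letter) : letter := if dec (y = (b0, true)) then (b0, true) else (b0, false).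

Lemma pad_neq_inv y : pad y <> inv_letter y.
Proof.
  unfold pad. destruct (dec (y = (b0, true))) as [->|Hy]; [discriminate|].
  intros E. apply Hy. now rewrite <- (inv_letter_involutive y), <- E.
Qed.

(* The first [N] letters [t] of [w], padded to a word of length [N + 2] that
   can sit between two letters [a] of a reduced word. *)
Definition core (w : word) : word :=
  let t := firstn N w in
  pad (hd (b0, false) t) :: t ++ pad (last t (b0, false)) :: repeat (a0, false) (N - length t).

Lemma length_core w : length (core w) = N + 2.
Proof.
  unfold core. simpl. rewrite length_app. simpl. rewrite repeat_length, length_firstn. lia.
Qed.

Lemma core_admissible w : reduced w -> reduced ((a0, false) :: core w ++ [(a0, false)]).
Proof.
  intros Hw. unfold core. set (t := firstn N w).
  set (lp := pad (hd (b0, false) t)). set (rp := pad (last t (b0, false))).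
  assert (Ht : reduced t)
    by (apply (reduced_app_l _ (skipn N w)); unfold t; now rewrite firstn_skipn).
  assert (Hmid : reduced (lp :: t ++ [rp])).
  { apply reduced_cons_snoc.
    - apply reduced_cons. split; [exact Ht|]. intros y t' E. unfold lp. rewrite E. simpl.
      intros E'. apply (pad_neq_inv y). rewrite E' at 2. now rewrite inv_letter_involutive.
    - apply reduced_snoc; [exact Ht|]. intros u y E. unfold rp. rewrite E, last_last.
      apply pad_neq_inv.
    - intros E. unfold lp, rp. rewrite E. unfold pad. simpl. destruct (dec _); discriminate. }
  assert (Htail : reduced (rp :: repeat (a0, false) (N - length t) ++ [(a0, false)])).
  { apply reduced_sandwich; [| |intros _]; unfold rp, pad; try destruct (dec _);
      intros E; inversion E; congruence. }
  apply reduced_cons. split.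
  - pose proof (reduced_glue (lp :: t) _ _ Hmid Htail) as R. simpl in R |- *.
    now rewrite <- !app_assoc in *.
  - intros y w' [= <- _]. unfold lp, pad. destruct (dec _); intros E; inversion E; congruence.
Qed.

Lemma core_injective w w' : core w = core w' -> firstn N w = firstn N w'.
Proof.
  unfold core. intros E. apply (f_equal (@rev _)) in E. simpl in E.
  rewrite !rev_app_distr in E. simpl in E. rewrite !rev_repeat, <- !app_assoc in E.
  apply repeat_app_cons_inj in E as (_ & _ & E);
    [|unfold pad; destruct (dec _); intros [= E']; congruence..].
  apply app_inj_tail in E as [E _].
  now rewrite <- (rev_involutive (firstn N w)), E, rev_involutive.
Qed.

Definition encode (h : list word) : list word :=
  map (fun j => marked_word a0 b0 j (core (nth j h []))) (seq 0 (length h)).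

Lemma length_encode h : length (encode h) = length h.
Proof. unfold encode. now rewrite length_map, length_seq. Qed.

Lemma nth_encode h j :
  j < length h -> nth j (encode h) [] = marked_word a0 b0 j (core (nth j h [])).
Proof.
  intros Hj. unfold encode. set (f := fun j => marked_word a0 b0 j (core (nth j h []))).
  rewrite nth_indep with (d' := f 0) by now rewrite length_map, length_seq.
  now rewrite map_nth, seq_nth.
Qed.

End Encoding.

Section Counting.
Context {A : Type}.
Notation word := (word A).
Variable enumA : list A.
Hypothesis HA : forall a : A, In a enumA.
Variables a0 b0 : A.
Hypothesis Hab : a0 <> b0.
Variable k : nat.

Definition letters : list (letter A) := flat_map (fun a => [(a, false); (a, true)]) enumA.

Lemma In_letters x : In x letters.
Proof.
  destruct x as [a s]. apply in_flat_map. exists a.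
  split; [apply HA|]. destruct s; simpl; auto.
Qed.

Definition tuples (K : nat) : list (list word) := lists_le (lists_le letters K) k.

Lemma In_tuples K (h : list word) :
  length h <= k -> Forall (fun w => length w <= K) h -> In h (tuples K).
Proof.
  intros Hlen Hw. apply in_lists_le; [exact Hlen|]. intros w Hin.
  apply in_lists_le; [now apply (proj1 (Forall_forall _ _) Hw)|]. intros; apply In_letters.
Qed.

Definition short_tuple (K : nat) (d : list word) : Prop :=
  length d = k /\ Forall (fun w => length w <= K) d.

Lemma In_tuples_Rk_le n h : Rk_le k n h -> In h (tuples n).
Proof.
  intros [Hlen Hw]. apply In_tuples; [lia|].
  eapply Forall_impl; [|exact Hw]. now intros w [_ Hw'].
Qed.

Lemma Rk_le_finite n : exists l, enumerates (Rk_le (A:=A) k n) l.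
Proof. apply (enumerates_exists _ (tuples n)), In_tuples_Rk_le. Qed.

Lemma Tn_finite n : exists l, enumerates (Tn (A:=A) k n) l.
Proof.
  apply (enumerates_exists _ (map (@gen A) (tuples n))).
  intros H (h & Hh & ->). now apply in_map, In_tuples_Rk_le.
Qed.

Lemma short_tuple_finite K : exists l, enumerates (short_tuple K) l.
Proof.
  apply (enumerates_exists _ (tuples K)).
  intros d [Hlen Hd]. apply In_tuples; [lia|exact Hd].
Qed.

Lemma Rk_le_repeat_nil n : Rk_le (A:=A) k n (repeat [] k).
Proof.
  split; [apply repeat_length|]. apply Forall_forall. intros x Hx.
  apply repeat_spec in Hx as ->. split; [apply reduced_nil|simpl; lia].
Qed.

Lemma card_Rk_le_pos n : 0 < fcard (Rk_le (A:=A) k n).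
Proof.
  destruct (Rk_le_finite n) as [l El].
  apply (fcard_pos _ l (repeat [] k) El), Rk_le_repeat_nil.
Qed.

Lemma card_Tn_pos n : 0 < fcard (Tn (A:=A) k n).
Proof.
  destruct (Tn_finite n) as [l El].
  apply (fcard_pos _ l (gen (repeat [] k)) El).
  exists (repeat [] k). split; [apply Rk_le_repeat_nil|reflexivity].
Qed.

(* Choosing a generating tuple for each subgroup injects [T_n] into [R_{<=n}^k]. *)
Lemma card_Tn_le_card_Rk_le n (Z : (word -> Prop) -> Prop) :
  fcard (fun H => Tn k n H /\ Z H) <= fcard (fun h => Rk_le k n h /\ Z (gen h)).
Proof.
  destruct (Tn_finite n) as [l1 E1]. apply (enumerates_subset _ Z) in E1 as [l1' E1].
  destruct (Rk_le_finite n) as [l2 E2].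
  apply (enumerates_subset _ (fun h => Z (gen h))) in E2 as [l2' E2].
  set (pre := fun H : word -> Prop => epsilon (inhabits []) (fun h => Rk_le k n h /\ H = gen h)).
  assert (Hpre : forall H, Tn k n H -> Rk_le k n (pre H) /\ H = gen (pre H)).
  { intros H Ht. exact (epsilon_spec (inhabits []) (fun h => Rk_le k n h /\ H = gen h) Ht). }
  apply (fcard_le_of_injective _ _ pre _ _ E1 E2).
  - intros H [Ht HZ]. destruct (Hpre H Ht) as [Hr E]. split; [exact Hr|now rewrite <- E].
  - intros H H' [Ht _] [Ht' _] E.
    now rewrite (proj2 (Hpre H Ht)), (proj2 (Hpre H' Ht')), E.
Qed.

Lemma Rk_le_nth n (h : list word) j :
  Rk_le k n h -> j < length h -> reduced (nth j h []) /\ length (nth j h []) <= n.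
Proof. intros [_ Hh] Hj. apply (proj1 (Forall_forall _ _) Hh), nth_In, Hj. Qed.

Section FixedLength.
Variable n : nat.
Hypothesis Hn : 4 * k + 5 <= n.

(* The longest encoded word, [marked_word (k - 1) (core w)], then has length exactly [n]. *)
Let N := n - (2 * k + 4).

Lemma encode_marked h :
  Rk_le k n h -> forall j, j < length (encode a0 b0 N h) ->
  exists c, nth j (encode a0 b0 N h) [] = marked_word a0 b0 j c /\ admissible_core a0 (N + 2) c.
Proof.
  intros Hh j Hj. rewrite length_encode in Hj. exists (core a0 b0 N (nth j h [])). split.
  - now apply nth_encode.
  - split; [|rewrite length_core; lia].
    apply core_admissible; [exact Hab|]. now apply (Rk_le_nth n).
Qed.

Lemma encode_Rk_le h : Rk_le k n h -> Rk_le k n (encode a0 b0 N h).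
Proof.
  intros Hh. split; [rewrite length_encode; apply Hh|].
  unfold encode. apply Forall_map, Forall_forall. intros j Hj. apply in_seq in Hj as [_ Hj'].
  destruct (Rk_le_nth n h j Hh Hj') as [Rj _]. split.
  - apply (marked_word_reduced _ _ Hab). now apply core_admissible.
  - rewrite length_marked_word, length_core. destruct Hh as [Hlen _]. unfold N. lia.
Qed.

Lemma gen_encode_injective h g : Rk_le k n h -> Rk_le k n g ->
  gen (encode a0 b0 N h) = gen (encode a0 b0 N g) -> encode a0 b0 N h = encode a0 b0 N g.
Proof.
  intros Hh Hg EG.
  assert (Hlen : length h = length g) by (destruct Hh, Hg; congruence).
  apply nth_ext with (d := []) (d' := []); [now rewrite !length_encode|].
  intros j Hj. rewrite length_encode in Hj.
  set (q := nth j (encode a0 b0 N g) []).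
  assert (Eq : q = marked_word a0 b0 j (core a0 b0 N (nth j g []))) by (apply nth_encode; lia).
  assert (Gq : gen (encode a0 b0 N h) q).
  { rewrite EG. apply gen_generator; [apply nth_In; rewrite length_encode; lia|].
    apply (proj1 (Forall_forall _ _) (proj2 (encode_Rk_le g Hg))), nth_In.
    rewrite length_encode. lia. }
  assert (Lq : length q < 2 * (N + 2)).
  { rewrite Eq, length_marked_word, length_core. destruct Hh as [Hk _]. unfold N. lia. }
  destruct (short_element_is_factor a0 b0 Hab (N + 2) _ (encode_marked h Hh) q Gq Lq)
    as (i & Hi & Ei); [now rewrite Eq|].
  assert (i = j) as ->.
  { rewrite length_encode in Hi. rewrite nth_encode, Eq in Ei by exact Hi.
    unfold marked_word in Ei. symmetry. exact (marker_injective a0 b0 Hab _ _ _ _ Ei). }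
  now rewrite Ei.
Qed.

Lemma encode_injective h g : Rk_le k n h -> Rk_le k n g ->
  encode a0 b0 N h = encode a0 b0 N g -> map (skipn N) h = map (skipn N) g -> h = g.
Proof.
  intros Hh Hg E ES.
  assert (Hlen : length h = length g) by (destruct Hh, Hg; congruence).
  apply nth_ext with (d := []) (d' := []); [exact Hlen|]. intros j Hj.
  assert (Ec : firstn N (nth j h []) = firstn N (nth j g [])).
  { apply (core_injective a0 b0 Hab), (marked_word_inj a0 b0 j).
    rewrite <- !nth_encode by lia. now rewrite E. }
  assert (Es : skipn N (nth j h []) = skipn N (nth j g [])).
  { pose proof (f_equal (fun l => nth j l (skipn N [])) ES) as E'. simpl in E'.
    now rewrite !map_nth in E'. }
  now rewrite <- (firstn_skipn N (nth j h [])), Ec, Es, firstn_skipn.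
Qed.

(* A tuple is recovered from the subgroup generated by its encoding and from the
   last [2 k + 4] letters of each of its words. *)
Lemma card_Rk_le_le :
  fcard (Rk_le (A:=A) k n) <= fcard (Tn (A:=A) k n) * fcard (short_tuple (2 * k + 4)).
Proof.
  destruct (Rk_le_finite n) as [l1 E1].
  destruct (Tn_finite n) as [l2 E2].
  destruct (short_tuple_finite (2 * k + 4)) as [l3 E3].
  rewrite <- (fcard_prod E2 E3).
  apply (fcard_le_of_injective _ _ (fun h => (gen (encode a0 b0 N h), map (skipn N) h)) _ _
           E1 (enumerates_prod E2 E3)).
  - intros h Hh. split.
    + exists (encode a0 b0 N h). split; [now apply encode_Rk_le|reflexivity].
    + destruct Hh as [Hlen Hw]. split; [transitivity (length h); [apply length_map|exact Hlen]|].
      apply Forall_map. eapply Forall_impl; [|exact Hw].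
      intros w [_ Lw]. rewrite length_skipn. unfold N. lia.
  - intros h g Hh Hg E. injection E as EG ES.
    apply encode_injective; auto. now apply gen_encode_injective.
Qed.

End FixedLength.

End Counting.

Open Scope R_scope.

Lemma INR_ratio_nonneg (a b : nat) : 0 <= INR a / INR b.
Proof.
  unfold Rdiv. apply Rmult_le_pos; [apply pos_INR|].
  destruct (Nat.eq_dec b 0) as [->|Hb]; [simpl; rewrite Rinv_0; lra|].
  apply Rlt_le, Rinv_0_lt_compat, lt_0_INR. lia.
Qed.

Lemma INR_ratio_le (a r b t M : nat) : (0 < r)%nat -> (0 < t)%nat -> (b * r <= M * a * t)%nat ->
  INR b / INR t <= INR M * (INR a / INR r).
Proof.
  intros Hr%lt_0_INR Ht%lt_0_INR H%le_INR. rewrite !mult_INR in H.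
  apply (Rmult_le_reg_r (INR t * INR r)); [nra|].
  replace (INR b / INR t * (INR t * INR r)) with (INR b * INR r) by (field; lra).
  replace (INR M * (INR a / INR r) * (INR t * INR r)) with (INR M * INR a * INR t) by (field; lra).
  lra.
Qed.

Lemma fcard_ratio_complement {U : Type} (S P : U -> Prop) l : enumerates S l -> (0 < fcard S)%nat ->
  1 - INR (fcard (fun x => S x /\ P x)) / INR (fcard S) =
  INR (fcard (fun x => S x /\ ~ P x)) / INR (fcard S).
Proof.
  intros El Hpos%lt_0_INR. rewrite (fcard_split S P l El) in *. rewrite plus_INR in *.
  field. lra.
Qed.

Section Probabilities.
Context {A : Type}.
Notation word := (word A).
Variable enumA : list A.
Hypothesis HA : forall a : A, In a enumA.
Variable k : nat.

Lemma Rk_of_Rk_le n (h : list word) : Rk_le k n h -> Rk k h.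
Proof.
  intros [Hlen Hh]. split; [exact Hlen|].
  eapply Forall_impl; [|exact Hh]. now intros w [Hw _].
Qed.

Lemma Pn_ext n (Y Y' : list word -> Prop) :
  (forall h, Rk_le k n h -> (Y h <-> Y' h)) -> Pn k n Y = Pn k n Y'.
Proof.
  intros H. unfold Pn. do 2 f_equal. apply fcard_ext.
  intros h. specialize (H h). tauto.
Qed.

Lemma Pn_complement n (Y : list word -> Prop) : 1 - Pn k n Y = Pn k n (fun h => ~ Y h).
Proof.
  destruct (Rk_le_finite enumA HA k n) as [l El].
  exact (fcard_ratio_complement _ Y l El (card_Rk_le_pos enumA HA k n)).
Qed.

Lemma Qn_complement n (X : (word -> Prop) -> Prop) : 1 - Qn k n X = Qn k n (fun H => ~ X H).
Proof.
  destruct (Tn_finite enumA HA k n) as [l El].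
  exact (fcard_ratio_complement _ X l El (card_Tn_pos enumA HA k n)).
Qed.

Lemma Qn_le_Pn (a0 b0 : A) n (Z : (word -> Prop) -> Prop) : a0 <> b0 -> (4 * k + 5 <= n)%nat ->
  Qn k n Z <= INR (fcard (short_tuple (A:=A) k (2 * k + 4))) * Pn k n (fun h => Z (gen h)).
Proof.
  intros Hab Hn.
  apply INR_ratio_le; [apply (card_Rk_le_pos enumA HA)|apply (card_Tn_pos enumA HA)|].
  pose proof (card_Tn_le_card_Rk_le enumA HA k n Z).
  pose proof (card_Rk_le_le enumA HA a0 b0 Hab k n Hn).
  nia.
Qed.

End Probabilities.

Lemma Un_cv_0_dominated (p q : nat -> R) (M : R) (n0 : nat) :
  (forall n, (n0 <= n)%nat -> 0 <= q n <= M * p n) -> Un_cv p 0 -> Un_cv q 0.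
Proof.
  intros Hq Hp eps Heps.
  destruct (Hp (eps / (Rabs M + 1))) as [N HN].
  { apply Rdiv_lt_0_compat; [exact Heps|]. pose proof (Rabs_pos M). lra. }
  exists (max N n0). intros n Hn. specialize (HN n ltac:(lia)). specialize (Hq n ltac:(lia)).
  unfold R_dist in *. rewrite Rminus_0_r in *.
  assert (Hbound : M * p n <= (Rabs M + 1) * Rabs (p n)).
  { pose proof (Rle_abs (M * p n)). rewrite Rabs_mult in *. pose proof (Rabs_pos (p n)). nra. }
  assert (Hlt : (Rabs M + 1) * Rabs (p n) < eps).
  { pose proof (Rabs_pos M).
    apply (Rmult_lt_compat_l (Rabs M + 1)) in HN; [|lra].
    now replace ((Rabs M + 1) * (eps / (Rabs M + 1))) with eps in HN by (field; lra). }
  rewrite Rabs_right by lra. lra.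
Qed.

Lemma exp_small_dominated (p q : nat -> R) (M : R) (n0 : nat) :
  (forall n, (n0 <= n)%nat -> 0 <= q n <= M * p n) -> exp_small p -> exp_small q.
Proof.
  intros Hq (c & C & Hc & N & HN). exists c, (Rabs M * C). split; [exact Hc|].
  exists (max N n0). intros n Hn. specialize (HN n ltac:(lia)). specialize (Hq n ltac:(lia)).
  pose proof (Rle_abs (M * p n)). rewrite Rabs_mult in *.
  apply (Rmult_le_compat_l (Rabs M)) in HN; [|apply Rabs_pos].
  rewrite Rabs_right by lra. rewrite Rmult_assoc. lra.
Qed.

Lemma Un_cv_1_iff (p : nat -> R) : Un_cv p 1 <-> Un_cv (fun n => 1 - p n) 0.
Proof.
  unfold Un_cv, R_dist.
  split; intros H eps Heps; destruct (H eps Heps) as [N HN]; exists N; intros n Hn;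
    specialize (HN n Hn); rewrite Rminus_0_r in *; now rewrite Rabs_minus_sym.
Qed.

Lemma asymptotic_transfer (p q : nat -> R) (M : R) (n0 : nat) :
  (forall n, (n0 <= n)%nat -> (0 <= q n <= M * p n) /\ (0 <= 1 - q n <= M * (1 - p n))) ->
  (Un_cv p 0 -> Un_cv q 0) /\ (exp_small p -> exp_small q) /\
  (Un_cv p 1 -> Un_cv q 1) /\ (exp_small (fun n => 1 - p n) -> exp_small (fun n => 1 - q n)).
Proof.
  intros H. split; [|split; [|split]].
  - apply (Un_cv_0_dominated p q M n0). intros n Hn. apply H, Hn.
  - apply (exp_small_dominated p q M n0). intros n Hn. apply H, Hn.
  - rewrite !Un_cv_1_iff. apply (Un_cv_0_dominated _ _ M n0). intros n Hn. apply H, Hn.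
  - apply (exp_small_dominated _ _ M n0). intros n Hn. apply H, Hn.
Qed.

Theorem mainTheorem4 (A : Type) (enumA : list A)
  (HA_fin : NoDup enumA /\ forall a : A, In a enumA) (HA_card : (2 <= length enumA)%nat)
  (k : nat) (Hk : (1 <= k)%nat)
  (X : (word A -> Prop) -> Prop) (HX : forall H, X H -> Tset k H) :
  let Y := fun h : list (word A) => Rk k h /\ X (gen h) in
  (Un_cv (fun n => Pn k n Y) 0 -> Un_cv (fun n => Qn k n X) 0) /\
  (exp_small (fun n => Pn k n Y) -> exp_small (fun n => Qn k n X)) /\
  (Un_cv (fun n => Pn k n Y) 1 -> Un_cv (fun n => Qn k n X) 1) /\
  (exp_small (fun n => 1 - Pn k n Y) -> exp_small (fun n => 1 - Qn k n X)).
Proof.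
  intros Y. destruct HA_fin as [ND HA].
  destruct enumA as [|a0 [|b0 rest]]; simpl in HA_card; try lia.
  assert (Hab : a0 <> b0) by (intros ->; inversion ND; subst; simpl in *; tauto).
  apply (asymptotic_transfer _ _ (INR (fcard (short_tuple (A:=A) k (2 * k + 4)))) (4 * k + 5)).
  intros n Hn.
  rewrite (Pn_ext k n Y (fun h => X (gen h))) by (intros h Hh%Rk_of_Rk_le; unfold Y; tauto).
  rewrite (Qn_complement _ HA), (Pn_complement _ HA).
  repeat split; try apply INR_ratio_nonneg; now apply (Qn_le_Pn _ HA k a0 b0).
Qed.
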